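(* Let $\alpha>0$ be non-integer, $n=\lfloor\alpha\rfloor+1$, and $a,b\in\mathbb{R}$ with $a<b$ and $b\equiv a\pmod 1$. If $f$ is defined on ${}_{b}\mathbb{N}$ and $g$ is defined on $\mathbb{N}_a$, then $$\sum_{s=a+1}^{b-1}f(s)\,(\Delta_{a+1}^{\alpha}g)(s-\alpha)=\sum_{s=a+1}^{b-1}g(s)\,({}_{b-1}\Delta^{\alpha}f)(s+\alpha).$$
   Context: Notation: $\mathbb{N}_a=\{a,a+1,\dots\}$, ${}_{b}\mathbb{N}=\{b,b-1,\dots\}$, $\sigma(t)=t+1$, $\Delta h(t)=h(t+1)-h(t)$, $\nabla h(t)=h(t)-h(t-1)$. Falling factorial $t^{(\beta)}=\Gamma(t+1)/\Gamma(t+1-\beta)$ (division at a pole gives $0$). Delta left fractional sum: $\Delta_c^{-\gamma}h(t)=\frac{1}{\Gamma(\gamma)}\sum_{s=c}^{t-\gamma}(t-\sigma(s))^{(\gamma-1)}h(s)$; delta left fractional difference: $\Delta_c^{\alpha}h(t)=\Delta^n\Delta_c^{-(n-\alpha)}h(t)$. Delta right fractional sum: ${}_{c}\Delta^{-\gamma}h(t)=\frac{1}{\Gamma(\gamma)}\sum_{s=t+\gamma}^{c}(s-\sigma(t))^{(\gamma-1)}h(s)$; delta right fractional difference: ${}_{c}\Delta^{\alpha}h(t)=(-1)^n\nabla^n\,{}_{c}\Delta^{-(n-\alpha)}h(t)$. Sums with upper limit smaller than lower limit are $0$ (in particular fractional sums evaluated at points beyond their starting/ending point are $0$). *)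

From Stdlib Require Import Reals Lra ZArith ClassicalEpsilon.
Open Scope R_scope.

Fixpoint sum_nat (n : nat) (F : nat -> R) : R :=
  match n with
  | O => 0
  | S m => sum_nat m F + F m
  end.

(** sumR c u F = sum over s = c, c+1, c+2, ... with s <= u of F s
    (empty, i.e. 0, when u < c).  The number of terms is floor(u-c)+1 = up(u-c). *)
Definition sumR (c u : R) (F : R -> R) : R :=
  sum_nat (Z.to_nat (up (u - c))) (fun k => F (c + INR k)).

(** Euler's Gamma function, via Gauss' limit formula
    Gamma x = lim_n n! n^x / (x (x+1) ... (x+n)). *)
Fixpoint poch_prod (x : R) (n : nat) : R :=
  match n with
  | O => x
  | S m => poch_prod x m * (x + INR (S m))
  end.

Definition gauss_seq (x : R) (n : nat) : R :=
  INR (fact n) * Rpower (INR n) x / poch_prod x n.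

Definition Gamma (x : R) : R :=
  epsilon (inhabits 0) (fun l => Un_cv (gauss_seq x) l).

Definition is_pole (x : R) : Prop := exists k : nat, x = - INR k.

Definition falling (t beta : R) : R :=
  match excluded_middle_informative (is_pole (t + 1 - beta)) with
  | left _ => 0
  | right _ => Gamma (t + 1) / Gamma (t + 1 - beta)
  end.

Fixpoint deltaN (n : nat) (h : R -> R) : R -> R :=
  match n with
  | O => h
  | S m => fun t => deltaN m h (t + 1) - deltaN m h t
  end.

Fixpoint nablaN (n : nat) (h : R -> R) : R -> R :=
  match n with
  | O => h
  | S m => fun t => nablaN m h t - nablaN m h (t - 1)
  end.

Definition frac_order (alpha : R) : nat := S (Z.to_nat (Int_part alpha)).

Definition frac_sum_left (c gamma : R) (h : R -> R) (t : R) : R :=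
  / Gamma gamma * sumR c (t - gamma) (fun s => falling (t - (s + 1)) (gamma - 1) * h s).

Definition frac_diff_left (c alpha : R) (h : R -> R) : R -> R :=
  let n := frac_order alpha in
  deltaN n (frac_sum_left c (INR n - alpha) h).

Definition frac_sum_right (c gamma : R) (h : R -> R) (t : R) : R :=
  / Gamma gamma * sumR (t + gamma) c (fun s => falling (s - (t + 1)) (gamma - 1) * h s).

Definition frac_diff_right (c alpha : R) (h : R -> R) : R -> R :=
  let n := frac_order alpha in
  fun t => (-1) ^ n * nablaN n (frac_sum_right c (INR n - alpha) h) t.

From Pilot Require Import Defs.
From Stdlib Require Import Reals ZArith Lra Lia.
Open Scope R_scope.

(* Stdlib's Reals also exports a sum_nat; we mean the one of Defs. *)
Local Notation sum_nat := Defs.sum_nat.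

(* Nothing about Gamma or the falling factorial is used: both
   fractional sums are convolutions of the form
     left_conv  c K g (t) = sum_{r = a+1}^{t-(c-alpha)} K (t - r) g r,
     right_conv c K f (t) = sum_{s = t+(c-alpha)}^{b-1} K (s - t) f s,
   with the same kernel K.  For such convolutions
   (1) a discrete Fubini argument (exchange of a triangular double sum) shows
       that  sum_s f s * left_conv (s - alpha) = sum_r g r * right_conv (r + alpha);
   (2) a forward difference of left_conv of order c+1 is the difference of a
       convolution of order c with the shifted kernel K(. + 1) and the original
       one; dually for backward differences of right_conv.
   Induction on m <= c then gives the identity with Delta^m on the left and
   (-1)^m nabla^m on the right, and the theorem is the case m = c = n with the
   kernel K e = (e-1)^(n-alpha-1) / Gamma (n-alpha). *)

Lemma sum_nat_ext (n : nat) (F G : nat -> R) :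
  (forall k, (k < n)%nat -> F k = G k) -> sum_nat n F = sum_nat n G.
Proof.
  induction n as [|n IH]; simpl; intros H; [reflexivity|].
  rewrite IH by (intros; apply H; lia). rewrite H by lia. reflexivity.
Qed.

Lemma sum_nat_plus (n : nat) (F G : nat -> R) :
  sum_nat n (fun k => F k + G k) = sum_nat n F + sum_nat n G.
Proof. induction n as [|n IH]; simpl; [ring|]. rewrite IH; ring. Qed.

Lemma sum_nat_minus (n : nat) (F G : nat -> R) :
  sum_nat n (fun k => F k - G k) = sum_nat n F - sum_nat n G.
Proof. induction n as [|n IH]; simpl; [ring|]. rewrite IH; ring. Qed.

Lemma sum_nat_scal (n : nat) (c : R) (F : nat -> R) :
  sum_nat n (fun k => c * F k) = c * sum_nat n F.
Proof. induction n as [|n IH]; simpl; [ring|]. rewrite IH; ring. Qed.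

Lemma sum_nat_zero (n : nat) (F : nat -> R) :
  (forall k, (k < n)%nat -> F k = 0) -> sum_nat n F = 0.
Proof.
  intros H. rewrite (sum_nat_ext n F (fun _ => 0)) by auto.
  clear H; induction n as [|n IH]; simpl; [ring|]. rewrite IH; ring.
Qed.

Lemma sum_nat_add (p q : nat) (G : nat -> R) :
  sum_nat (p + q) G = sum_nat p G + sum_nat q (fun j => G (p + j)%nat).
Proof.
  induction q as [|q IH]; simpl.
  - rewrite Nat.add_0_r; ring.
  - rewrite Nat.add_succ_r; simpl. rewrite IH; ring.
Qed.

Lemma sum_nat_swap (n m : nat) (H : nat -> nat -> R) :
  sum_nat n (fun x => sum_nat m (fun i => H x i))
  = sum_nat m (fun i => sum_nat n (fun x => H x i)).
Proof.
  induction n as [|n IH]; simpl.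
  - symmetry; apply sum_nat_zero; auto.
  - rewrite IH, sum_nat_plus. reflexivity.
Qed.

Lemma sum_nat_pad (n m : nat) (F : nat -> R) :
  (n <= m)%nat -> sum_nat n F = sum_nat m (fun i => if (i <? n)%nat then F i else 0).
Proof.
  intros Hnm. replace m with (n + (m - n))%nat by lia. rewrite sum_nat_add.
  rewrite (sum_nat_zero (m - n)).
  2:{ intros j _. destruct (Nat.ltb_spec (n + j) n); [lia|reflexivity]. }
  rewrite Rplus_0_r. apply sum_nat_ext. intros k Hk.
  destruct (Nat.ltb_spec k n); [reflexivity|lia].
Qed.

Lemma sum_nat_shift (p M : nat) (G : nat -> R) :
  sum_nat M (fun x => if (p <=? x)%nat then G x else 0)
  = sum_nat (M - p) (fun j => G (p + j)%nat).
Proof.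
  destruct (Nat.leb_spec p M).
  - replace M with (p + (M - p))%nat at 1 by lia. rewrite sum_nat_add.
    rewrite (sum_nat_zero p).
    2:{ intros j Hj. destruct (Nat.leb_spec p j); [lia|reflexivity]. }
    rewrite Rplus_0_l. apply sum_nat_ext. intros k _.
    destruct (Nat.leb_spec p (p + k)); [reflexivity|lia].
  - replace (M - p)%nat with 0%nat by lia. simpl. apply sum_nat_zero. intros k Hk.
    destruct (Nat.leb_spec p k); [lia|reflexivity].
Qed.

(* Discrete Fubini on the triangle {(x, i) | i + c <= x < M}, written as a
   convolution with kernel kap in both orders of summation. *)
Lemma sum_nat_triangle (M c : nat) (u v kap : nat -> R) :
  sum_nat M (fun x => u x * sum_nat (S x - c) (fun i => kap (x - i)%nat * v i))
  = sum_nat M (fun y => v y * sum_nat (M - (y + c)) (fun i => kap (c + i)%nat * u (y + c + i)%nat)).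
Proof.
  set (H := fun x i => if (i + c <=? x)%nat then u x * kap (x - i)%nat * v i else 0).
  transitivity (sum_nat M (fun x => sum_nat M (fun i => H x i))).
  { apply sum_nat_ext. intros x Hx. rewrite (sum_nat_pad (S x - c) M) by lia.
    rewrite <- sum_nat_scal. apply sum_nat_ext. intros i _. unfold H.
    destruct (Nat.ltb_spec i (S x - c)); destruct (Nat.leb_spec (i + c) x); try lia; ring. }
  rewrite sum_nat_swap. apply sum_nat_ext. intros y _.
  change (sum_nat M (fun x => H x y))
    with (sum_nat M (fun x => if (y + c <=? x)%nat then u x * kap (x - y)%nat * v y else 0)).
  rewrite sum_nat_shift, <- sum_nat_scal. apply sum_nat_ext. intros j _.
  replace (y + c + j - y)%nat with (c + j)%nat by lia. ring.
Qed.

Lemma up_IZR (z : Z) : up (IZR z) = (z + 1)%Z.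
Proof. symmetry; apply up_tech; rewrite ?plus_IZR; simpl; lra. Qed.

Lemma sumR_nat (c u : R) (F : R -> R) (z : Z) :
  u - c = IZR z -> sumR c u F = sum_nat (Z.to_nat (z + 1)) (fun k => F (c + INR k)).
Proof. intros H. unfold sumR. rewrite H, up_IZR. reflexivity. Qed.

Lemma sumR_ext (c u : R) (F G : R -> R) :
  (forall x, F x = G x) -> sumR c u F = sumR c u G.
Proof. intros H. unfold sumR. apply sum_nat_ext. auto. Qed.

Lemma sumR_minus (c u : R) (F G : R -> R) :
  sumR c u (fun x => F x - G x) = sumR c u F - sumR c u G.
Proof. unfold sumR. apply sum_nat_minus. Qed.

Lemma sumR_scal (c u k : R) (F : R -> R) :
  sumR c u (fun x => k * F x) = k * sumR c u F.
Proof. unfold sumR. apply sum_nat_scal. Qed.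

Lemma deltaN_ext (m : nat) (h h' : R -> R) (t : R) :
  (forall t, h t = h' t) -> deltaN m h t = deltaN m h' t.
Proof. intros H; revert t; induction m; intros t; simpl; auto. rewrite !IHm; reflexivity. Qed.

Lemma nablaN_ext (m : nat) (h h' : R -> R) (t : R) :
  (forall t, h t = h' t) -> nablaN m h t = nablaN m h' t.
Proof. intros H; revert t; induction m; intros t; simpl; auto. rewrite !IHm; reflexivity. Qed.

Lemma deltaN_shift (m : nat) (h : R -> R) (t : R) :
  deltaN m h (t + 1) = deltaN m (fun u => h (u + 1)) t.
Proof. revert t; induction m; intros t; simpl; auto. rewrite !IHm; reflexivity. Qed.

Lemma nablaN_shift (m : nat) (h : R -> R) (t : R) :
  nablaN m h (t - 1) = nablaN m (fun u => h (u - 1)) t.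
Proof. revert t; induction m; intros t; simpl; auto. rewrite !IHm; reflexivity. Qed.

Section Convolutions.

Variables (a b alpha : R) (f g : R -> R).

Definition left_conv (c : nat) (K : R -> R) (t : R) : R :=
  sumR (a + 1) (t - (INR c - alpha)) (fun r => K (t - r) * g r).

Definition right_conv (c : nat) (K : R -> R) (t : R) : R :=
  sumR (t + (INR c - alpha)) (b - 1) (fun s => K (s - t) * f s).

Lemma left_conv_succ (c : nat) (K : R -> R) (t : R) :
  left_conv (S c) K (t + 1) = left_conv c (fun e => K (e + 1)) t.
Proof.
  unfold left_conv. replace (t + 1 - (INR (S c) - alpha)) with (t - (INR c - alpha))
    by (rewrite S_INR; ring).
  apply sumR_ext. intros r. replace (t + 1 - r) with (t - r + 1) by ring. reflexivity.
Qed.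

Lemma right_conv_succ (c : nat) (K : R -> R) (t : R) :
  right_conv (S c) K (t - 1) = right_conv c (fun e => K (e + 1)) t.
Proof.
  unfold right_conv. replace (t - 1 + (INR (S c) - alpha)) with (t + (INR c - alpha))
    by (rewrite S_INR; ring).
  apply sumR_ext. intros s. replace (s - (t - 1)) with (s - t + 1) by ring. reflexivity.
Qed.

Lemma deltaN_left_conv_succ (m c : nat) (K : R -> R) (t : R) :
  deltaN (S m) (left_conv (S c) K) t
  = deltaN m (left_conv c (fun e => K (e + 1))) t - deltaN m (left_conv (S c) K) t.
Proof.
  cbn [deltaN]. rewrite deltaN_shift. f_equal.
  apply deltaN_ext. intros u. apply left_conv_succ.
Qed.

Lemma nablaN_right_conv_succ (m c : nat) (K : R -> R) (t : R) :
  nablaN (S m) (right_conv (S c) K) t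
  = nablaN m (right_conv (S c) K) t - nablaN m (right_conv c (fun e => K (e + 1))) t.
Proof.
  cbn [nablaN]. rewrite nablaN_shift. f_equal.
  apply nablaN_ext. intros u. apply right_conv_succ.
Qed.

Hypothesis integral_range : exists k : Z, b - a = IZR k.

Lemma conv_duality (c : nat) (K : R -> R) :
  sumR (a + 1) (b - 1) (fun s => f s * left_conv c K (s - alpha))
  = sumR (a + 1) (b - 1) (fun r => g r * right_conv c K (r + alpha)).
Proof.
  destruct integral_range as [k Hk].
  assert (E : b - 1 - (a + 1) = IZR (k - 2)) by (rewrite minus_IZR; lra).
  rewrite !(sumR_nat (a + 1) (b - 1) _ (k - 2)) by exact E.
  set (M := Z.to_nat (k - 2 + 1)).
  set (u := fun x : nat => f (a + 1 + INR x)).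
  set (v := fun x : nat => g (a + 1 + INR x)).
  set (kap := fun d : nat => K (INR d - alpha)).
  transitivity (sum_nat M (fun x => u x * sum_nat (S x - c) (fun i => kap (x - i)%nat * v i))).
  { apply sum_nat_ext. intros x _. unfold u. f_equal. unfold left_conv.
    rewrite (sumR_nat _ _ _ (Z.of_nat x - Z.of_nat c)).
    2:{ rewrite minus_IZR, <- !INR_IZR_INZ. ring. }
    replace (Z.to_nat (Z.of_nat x - Z.of_nat c + 1)) with (S x - c)%nat by lia.
    apply sum_nat_ext. intros i Hi. unfold kap, v. f_equal. f_equal.
    rewrite minus_INR by lia. ring. }
  rewrite sum_nat_triangle. apply sum_nat_ext. intros y Hy. unfold v. f_equal.
  unfold right_conv.
  rewrite (sumR_nat _ _ _ (k - 2 - Z.of_nat y - Z.of_nat c)).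
  2:{ rewrite !minus_IZR, <- !INR_IZR_INZ. rewrite minus_IZR in E. lra. }
  replace (Z.to_nat (k - 2 - Z.of_nat y - Z.of_nat c + 1)) with (M - (y + c))%nat
    by (unfold M; lia).
  apply sum_nat_ext. intros i _. unfold kap, u. rewrite !plus_INR.
  f_equal; f_equal; ring.
Qed.

Lemma conv_diff_duality (m c : nat) (K : R -> R) : (m <= c)%nat ->
  sumR (a + 1) (b - 1) (fun s => f s * deltaN m (left_conv c K) (s - alpha))
  = (-1) ^ m * sumR (a + 1) (b - 1) (fun r => g r * nablaN m (right_conv c K) (r + alpha)).
Proof.
  revert c K. induction m as [|m IH]; intros c K Hc.
  - cbn [deltaN nablaN pow]. rewrite Rmult_1_l. apply conv_duality.
  - destruct c as [|c]; [lia|].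
    rewrite (sumR_ext _ _ _ (fun s => f s * deltaN m (left_conv c (fun e => K (e + 1))) (s - alpha)
                                      - f s * deltaN m (left_conv (S c) K) (s - alpha))).
    2:{ intros s. rewrite deltaN_left_conv_succ. ring. }
    rewrite (sumR_ext _ _ (fun r => g r * nablaN (S m) (right_conv (S c) K) (r + alpha))
                          (fun r => g r * nablaN m (right_conv (S c) K) (r + alpha)
                            - g r * nablaN m (right_conv c (fun e => K (e + 1))) (r + alpha))).
    2:{ intros r. rewrite nablaN_right_conv_succ. ring. }
    rewrite !sumR_minus, !IH by lia. cbn [pow]. ring.
Qed.

End Convolutions.

Definition frac_kernel (gamma : R) (e : R) : R :=
  / Gamma gamma * falling (e - 1) (gamma - 1).

Lemma frac_sum_left_conv (a alpha : R) (g : R -> R) (n : nat) (t : R) :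
  frac_sum_left (a + 1) (INR n - alpha) g t
  = left_conv a alpha g n (frac_kernel (INR n - alpha)) t.
Proof.
  unfold frac_sum_left, left_conv, frac_kernel. rewrite <- sumR_scal.
  apply sumR_ext. intros r. replace (t - r - 1) with (t - (r + 1)) by ring. ring.
Qed.

Lemma frac_sum_right_conv (b alpha : R) (f : R -> R) (n : nat) (t : R) :
  frac_sum_right (b - 1) (INR n - alpha) f t
  = right_conv b alpha f n (frac_kernel (INR n - alpha)) t.
Proof.
  unfold frac_sum_right, right_conv, frac_kernel. rewrite <- sumR_scal.
  apply sumR_ext. intros s. replace (s - t - 1) with (s - (t + 1)) by ring. ring.
Qed.

Theorem proposition4p7 (alpha a b : R) (f g : R -> R) :
  0 < alpha ->
  (forall k : Z, alpha <> IZR k) ->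
  a < b ->
  (exists k : Z, b - a = IZR k) ->
  sumR (a + 1) (b - 1) (fun s => f s * frac_diff_left (a + 1) alpha g (s - alpha))
  = sumR (a + 1) (b - 1) (fun s => g s * frac_diff_right (b - 1) alpha f (s + alpha)).
Proof.
  intros _ _ _ Hint.
  set (n := frac_order alpha).
  set (K := frac_kernel (INR n - alpha)).
  transitivity (sumR (a + 1) (b - 1) (fun s => f s * deltaN n (left_conv a alpha g n K) (s - alpha))).
  { apply sumR_ext. intros s. f_equal.
    apply deltaN_ext. intros t. apply frac_sum_left_conv. }
  rewrite (conv_diff_duality a b alpha f g Hint n n K (le_n n)), <- sumR_scal.
  apply sumR_ext. intros r. unfold frac_diff_right; fold n.
  rewrite (nablaN_ext n (frac_sum_right (b - 1) (INR n - alpha) f) (right_conv b alpha f n K)).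
  { ring. }
  intros t. apply frac_sum_right_conv.
Qed.
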